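(* If $\mathcal M'$ is a simple acyclic oriented matroid on a finite set $E$, then there is a total order $<$ of $E$ such that there is a strong map $\mathcal M'\longrightarrow\mathcal M(<)$.
   Context: For a finite set $E$ totally ordered by $<$, $\mathcal M(<)$ is the uniform rank 2 oriented matroid on $E$ whose signed circuits are $(\{e_1,e_3\},\{e_2\})$ and $(\{e_2\},\{e_1,e_3\})$ for $e_1<e_2<e_3$, and whose signed cocircuits are $(\{e':e'<e\},\{e'':e''>e\})$ and its opposite, for $e\in E$. For two oriented matroids $\mathcal M_1,\mathcal M_2$ on the same ground set, a strong map $\mathcal M_1\longrightarrow\mathcal M_2$ exists if every cocircuit of $\mathcal M_2$ is a covector of $\mathcal M_1$ (equivalently, every circuit of $\mathcal M_1$ is a vector of $\mathcal M_2$). *)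

From mathcomp Require Import all_boot.
Set Implicit Arguments. Unset Strict Implicit. Unset Printing Implicit Defensive.

Inductive sgn := SZero | SPos | SNeg.

Definition sopp (s : sgn) : sgn :=
  match s with SZero => SZero | SPos => SNeg | SNeg => SPos end.

Section OM.
Variable E : finType.

Definition svec := E -> sgn.
Definition vopp (X : svec) : svec := fun e => sopp (X e).
Definition supp (X : svec) (e : E) : Prop := X e <> SZero.
Definition is_zero (X : svec) : Prop := forall e, X e = SZero.
Definition veq (X Y : svec) : Prop := forall e, X e = Y e.

(* signed circuit axioms (C0)-(C3) of Bjorner et al., "Oriented Matroids" 3.2.1 *)
Definition is_OM_circuits (C : svec -> Prop) : Prop :=
  [/\ (forall X, C X -> ~ is_zero X),
      (forall X, C X -> C (vopp X)),
      (forall X Y, C X -> C Y -> (forall e, supp X e -> supp Y e) ->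
          veq X Y \/ veq X (vopp Y)) &
      (forall X Y e, C X -> C Y -> ~ veq X (vopp Y) ->
          X e = SPos -> Y e = SNeg ->
          exists Z, [/\ C Z, Z e = SZero &
            forall f, (Z f = SPos -> X f = SPos \/ Y f = SPos) /\
                      (Z f = SNeg -> X f = SNeg \/ Y f = SNeg)])].

(* simple: no loops (circuits of size 1) and no parallel pairs (size 2) *)
Definition OM_simple (C : svec -> Prop) : Prop :=
  forall X, C X -> ~ (exists e, forall f, supp X f -> f = e) /\
                   ~ (exists e1 e2, forall f, supp X f -> f = e1 \/ f = e2).

(* acyclic: no positive circuit *)
Definition OM_acyclic (C : svec -> Prop) : Prop :=
  forall X, C X -> exists e, X e = SNeg.

Definition orth (X Y : svec) : Prop :=
  (forall e, X e = SZero \/ Y e = SZero) \/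
  ((exists e, (X e = SPos /\ Y e = SPos) \/ (X e = SNeg /\ Y e = SNeg)) /\
   (exists f, (X f = SPos /\ Y f = SNeg) \/ (X f = SNeg /\ Y f = SPos))).

Definition OM_covector (C : svec -> Prop) (Y : svec) : Prop :=
  forall X, C X -> orth X Y.

Definition strict_total_order (lt : rel E) : Prop :=
  [/\ (forall x, ~~ lt x x),
      (forall x y z, lt x y -> lt y z -> lt x z) &
      (forall x y, x != y -> lt x y || lt y x)].

Definition Mlt_cocircuit (lt : rel E) (Y : svec) : Prop :=
  exists e, veq Y (fun f => if lt f e then SPos else if lt e f then SNeg else SZero)
         \/ veq Y (fun f => if lt f e then SNeg else if lt e f then SPos else SZero).

Definition strong_map (C1 : svec -> Prop) (cocirc2 : svec -> Prop) : Prop :=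
  forall Y, cocirc2 Y -> OM_covector C1 Y.

End OM.

From mathcomp Require Import all_boot.
From Stdlib Require Import Classical.
Set Implicit Arguments. Unset Strict Implicit. Unset Printing Implicit Defensive.

(* A sign vector is a tope when no circuit conforms to it.  Acyclicity makes
   the all-negative vector a tope, and its entries can be made positive one at
   a time through topes: if flipping g is obstructed by a circuit Y, then the
   entry e that can be flipped in the restriction to E \ g can be flipped on E,
   because eliminating g between Y and a circuit X obstructing e (simplicity
   rules out X = -Y) leaves a circuit obstructing either S or the flip of e on
   E \ g.  Ordering E by flipping time, the topes just before and just after
   flipping e agree off e with the cocircuit of M(<) at e, and a circuit X with
   no sign agreement (resp. disagreement) with it would make -X (resp. X)
   conform to one of these two topes. *)

Definition isneg (s : sgn) : bool := if s is SNeg then true else false.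

Lemma isnegP (s : sgn) : reflect (s = SNeg) (isneg s).
Proof. by case: s; constructor. Qed.

Lemma eqn_index (T : eqType) (s : seq T) x y :
  x \in s -> y \in s -> (index x s == index y s) = (x == y).
Proof. by move=> xs ys; apply/eqP/eqP => [/(index_inj x xs ys) | ->]. Qed.

Lemma index_strict_total_order (T : finType) (s : seq T) :
  (forall x, x \in s) -> strict_total_order (fun x y => index x s < index y s).
Proof.
move=> s_all; split=> [x | x y z | x y]; [by rewrite ltnn | exact: ltn_trans |].
by rewrite -(eqn_index (s_all x) (s_all y)); case: ltngtP.
Qed.

Section Topes.

Variable E : finType.
Implicit Types (S W X Y Z : svec E) (K : {set E}) (e f g : E) (p s : seq E).

Definition conformal W S := forall f, supp W f -> W f = S f.

Definition upd S e (v : sgn) : svec E := fun f => if f == e then v else S f.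

Definition raise S p : svec E := fun f => if f \in p then SPos else S f.

Definition negs K S := [set x in K | isneg (S x)].

Lemma conformal_or_upd W S e :
  S e = SNeg -> (forall f, f != e -> supp W f -> W f = S f) ->
  conformal W S \/ conformal W (upd S e SPos).
Proof.
move=> Se agree; case We: (W e).
- left=> f; case: (eqVneq f e) => [-> | fe]; last exact: agree.
  by rewrite /supp We.
- right=> f; rewrite /upd; case: (eqVneq f e) => [-> _ | fe]; first by rewrite We.
  exact: agree.
- by left=> f; case: (eqVneq f e) => [-> _ | fe]; [rewrite We Se | exact: agree].
Qed.

Lemma orthN X Y : orth X (vopp Y) -> orth X Y.
Proof.
rewrite /orth /vopp => -[disj | [[e He] [f Hf]]].
- by left=> g; case: (disj g) => [-> | ]; [left | case: (Y g); auto].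
- right; split; [exists f; move: Hf | exists e; move: He];
    by case: (X _); case: (Y _) => /=; intuition discriminate.
Qed.

Variable C : svec E -> Prop.

(* For S without zeros, [tope_on K S] says that S restricted to K is a tope of
   the restriction to K: no circuit supported in K conforms to S. *)
Definition tope_on K S :=
  forall X, C X -> (forall f, supp X f -> f \in K) -> ~ conformal X S.

Lemma tope_on_ext K S S' : (forall f, S f = S' f) -> tope_on K S -> tope_on K S'.
Proof. by move=> SS' tS X CX XK Xc; apply: (tS X CX XK) => f Xf; rewrite SS' Xc. Qed.

Lemma tope_onS K K' S : K' \subset K -> tope_on K S -> tope_on K' S.
Proof. by move=> sK'K tS X CX XK'; apply: tS CX _ => f /XK' /(subsetP sK'K). Qed.

Hypothesis C_om : is_OM_circuits C.
Hypothesis C_simple : OM_simple C.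
Hypothesis C_acyclic : OM_acyclic C.

Lemma tope_on_neg K : tope_on K (fun=> SNeg).
Proof.
case: C_om => _ C_opp _ _ X CX _ Xc.
have [f] := C_acyclic (C_opp X CX); rewrite /vopp.
by case Xf: (X f) (Xc f) => //; rewrite /supp Xf => /(_ _) ->.
Qed.

Lemma circuit_elim X Y e :
  C X -> C Y -> ~ veq X (vopp Y) -> X e = SPos -> Y e = SNeg ->
  exists2 Z, C Z /\ Z e = SZero & forall f, supp Z f -> Z f = X f \/ Z f = Y f.
Proof.
case: C_om => _ _ _ C_elim CX CY XY Xe Ye.
have [Z [CZ Ze Zsign]] := C_elim X Y e CX CY XY Xe Ye.
exists Z => // f; have [Zpos Zneg] := Zsign f.
rewrite /supp; case: (Z f) Zpos Zneg => [_ _ [] // | /(_ erefl) + _ _ | _ /(_ erefl) + _];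
  by case=> <-; auto.
Qed.

Lemma tope_exchange K S g e Y :
  tope_on K S -> S g = SNeg -> S e = SNeg -> e != g ->
  tope_on (K :\ g) (upd S e SPos) ->
  C Y -> (forall f, supp Y f -> f \in K) -> conformal Y (upd S g SPos) ->
  tope_on K (upd S e SPos).
Proof.
move=> tS Sg Se eg te CY YK Yc X CX XK Xc.
have XS f : f != e -> supp X f -> X f = S f.
  by move=> fe Xf; rewrite Xc // /upd (negbTE fe).
have YS f : f != g -> supp Y f -> Y f = S f.
  by move=> fg Yf; rewrite Yc // /upd (negbTE fg).
have Yg : Y g = SPos.
  case Yg: (Y g) => //.
  - exfalso; apply: (tS Y CY YK) => f Yf.
    have fg : f != g by apply/eqP=> fg; apply: Yf; rewrite fg.
    exact: YS.
  - by rewrite -Yg Yc /upd ?eqxx // /supp Yg.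
case Xg: (X g).
- apply: (te X CX _ Xc) => f Xf; rewrite in_setD1 XK // andbT.
  by apply/eqP=> fg; apply: Xf; rewrite fg.
- by have := XS g; rewrite eq_sym eg /supp Xg Sg => /(_ isT) /(_ ltac:(done)).
have not_opp : ~ veq Y (vopp X).
  move=> YX; apply: (proj2 (C_simple CY)); exists e, g => f Yf.
  case: (eqVneq f e) => [| fe]; first by left.
  case: (eqVneq f g) => [| fg]; first by right.
  have Xf : supp X f by move=> X0; apply: Yf; rewrite YX /vopp X0.
  have Sf : S f <> SZero by rewrite -(YS f fg Yf).
  by move: (YX f) Sf; rewrite /vopp (XS f fe Xf) (YS f fg Yf); case: (S f).
have [Z [CZ Zg] Zsign] := circuit_elim CY CX not_opp Yg Xg.
have ZK f : supp Z f -> f \in K.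
  by move=> Zf; case: (Zsign f Zf) => ZE; [apply: YK | apply: XK]; rewrite /supp -ZE.
have ZS f : f != e -> supp Z f -> Z f = S f.
  move=> fe Zf; have fg : f != g by apply/eqP=> fg; apply: Zf; rewrite fg.
  case: (Zsign f Zf) => ZE; rewrite ZE; [apply: YS | apply: XS] => //;
    by rewrite /supp -ZE.
case: (conformal_or_upd Se ZS) => Zc; first exact: (tS Z CZ ZK).
apply: (te Z CZ _ Zc) => f Zf; rewrite in_setD1 ZK // andbT.
by apply/eqP=> fg; apply: Zf; rewrite fg.
Qed.

Lemma tope_flip K S g :
  tope_on K S -> g \in K -> S g = SNeg ->
  exists e, [/\ e \in K, S e = SNeg & tope_on K (upd S e SPos)].
Proof.
have [n] := ubnP #|negs K S|; elim: n => // n IH in K S g *.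
rewrite ltnS => le_negs tS gK Sg.
case: (set_0Vmem (negs (K :\ g) S)) => [no_neg | [h]].
  exists g; split=> // X CX XK Xc.
  have [h Xh] := C_acyclic CX.
  have : upd S g SPos h = SNeg by rewrite -Xc // /supp Xh.
  rewrite /upd; case: eqVneq => // hg Sh.
  suff : h \in negs (K :\ g) S by rewrite no_neg inE.
  by rewrite !inE hg XK ?Sh // /supp Xh.
rewrite /negs !inE => /andP[/andP[hg hK] /isnegP Sh].
have lt_negs : #|negs (K :\ g) S| < #|negs K S|.
  have -> : negs (K :\ g) S = negs K S :\ g.
    by apply/setP=> x; rewrite /negs !inE andbA.
  by apply/proper_card/properD1; rewrite /negs inE gK Sg.
have hKg : h \in K :\ g by rewrite in_setD1 hg.
have [e [eKg Se te]] :=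
  IH (K :\ g) S h (leq_trans lt_negs le_negs) (tope_onS (subD1set K g) tS) hKg Sh.
move: eKg; rewrite in_setD1 => /andP[eg eK].
case: (classic (tope_on K (upd S g SPos))) => [tg | not_tg]; first by exists g.
have [Y [CY YK Yc]] :
    exists Y, [/\ C Y, forall f, supp Y f -> f \in K & conformal Y (upd S g SPos)].
  by apply: NNPP => noY; apply: not_tg => Y CY YK Yc; apply: noY; exists Y.
by exists e; split=> //; apply: tope_exchange tS Sg Se eg te CY YK Yc.
Qed.

Lemma tope_chain S : tope_on setT S ->
  exists s, (forall x, S x = SNeg -> x \in s) /\
            forall k, tope_on setT (raise S (take k s)).
Proof.
have [n] := ubnP #|negs setT S|; elim: n => // n IH in S *.
rewrite ltnS => le_negs tS.
have raise_nil : tope_on setT (raise S [::]) by apply: tope_on_ext tS.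
case: (set_0Vmem (negs setT S)) => [no_neg | [g]].
  exists [::]; split=> [x Sx | k]; last by case: k.
  suff : x \in negs setT S by rewrite no_neg inE.
  by rewrite /negs !inE Sx.
rewrite /negs !inE => /isnegP Sg.
have [e [_ Se te]] := tope_flip tS (in_setT g) Sg.
have lt_negs : #|negs setT (upd S e SPos)| < #|negs setT S|.
  have -> : negs setT (upd S e SPos) = negs setT S :\ e.
    by apply/setP=> x; rewrite /negs /upd !inE; case: eqVneq.
  by apply/proper_card/properD1; rewrite /negs !inE Se.
have [s [s_negs s_topes]] := IH _ (leq_trans lt_negs le_negs) te.
exists (e :: s); split=> [x Sx | [// | k]].
  rewrite inE; case: eqVneq => //= xe.
  by apply: s_negs; rewrite /upd (negbTE xe).
apply: tope_on_ext (s_topes k) => f.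
by rewrite /raise /upd /= inE; case: (f == e); case: (f \in take k s).
Qed.

Lemma exists_opposite_sign S e Y W :
  tope_on setT S -> tope_on setT (upd S e SPos) -> S e = SNeg ->
  (forall f, supp S f) -> (forall f, f != e -> Y f = S f) ->
  C W -> exists f, supp W f /\ W f = sopp (Y f).
Proof.
move=> tS tS' Se S_full YS CW; apply: NNPP => no_opp.
have agree f : f != e -> supp W f -> W f = S f.
  move=> fe Wf; rewrite -(YS f fe).
  have Yf : supp Y f by rewrite /supp YS //; apply: S_full.
  have : W f <> sopp (Y f) by move=> WY; apply: no_opp; exists f.
  by move: Wf Yf; rewrite /supp; case: (W f); case: (Y f).
by case: (conformal_or_upd Se agree); [apply: tS | apply: tS'].
Qed.

Lemma orth_of_adjacent_topes S e Y X :
  tope_on setT S -> tope_on setT (upd S e SPos) -> S e = SNeg ->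
  (forall f, supp S f) -> (forall f, f != e -> Y f = S f) ->
  C X -> orth X Y.
Proof.
case: C_om => _ C_opp _ _ tS tS' Se S_full YS CX.
have opp := exists_opposite_sign tS tS' Se S_full YS.
right; split.
- have [f [Xf XY]] := opp _ (C_opp _ CX); exists f.
  by move: Xf XY; rewrite /supp /vopp; case: (X f); case: (Y f); auto.
- have [f [Xf XY]] := opp _ CX; exists f.
  by move: Xf XY; rewrite /supp; case: (X f); case: (Y f); auto.
Qed.

Lemma orth_of_chain s e Y X :
  (forall x, x \in s) -> (forall k, tope_on setT (raise (fun=> SNeg) (take k s))) ->
  (forall f, f != e -> Y f = if index f s < index e s then SPos else SNeg) ->
  C X -> orth X Y.
Proof.
move=> s_all s_topes YS CX.
set S := raise (fun=> SNeg) (take (index e s) s).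
have S_idx f : S f = if index f s < index e s then SPos else SNeg.
  by rewrite /S /raise in_take.
apply: (@orth_of_adjacent_topes S e Y X (s_topes _) _ _ _ _ CX).
- apply: tope_on_ext (s_topes (index e s).+1) => f.
  rewrite /raise /upd in_take // ltnS leq_eqVlt S_idx eqn_index //.
  by case: eqVneq.
- by rewrite S_idx ltnn.
- by move=> f; rewrite /supp S_idx; case: ifP.
- by move=> f fe; rewrite YS // S_idx.
Qed.

End Topes.

Theorem lemmal (E : finType) (C : svec E -> Prop) :
  is_OM_circuits C -> OM_simple C -> OM_acyclic C ->
  exists lt : rel E, strict_total_order lt /\ strong_map C (Mlt_cocircuit lt).
Proof.
move=> C_om C_simple C_acyclic.
have [s [s_neg s_topes]] :=
  tope_chain C_om C_simple C_acyclic (@tope_on_neg _ _ C_om C_acyclic setT).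
have s_all x : x \in s by exact: s_neg.
exists (fun x y => index x s < index y s).
split; first exact: index_strict_total_order.
move=> Y [e Ye] X CX.
have idx_neq f : f != e -> index f s != index e s by rewrite eqn_index.
case: Ye => Ye.
- apply: (orth_of_chain C_om s_all s_topes _ CX) => f fe.
  by rewrite Ye; case: ltngtP (idx_neq f fe).
- apply/orthN/(orth_of_chain C_om s_all s_topes _ CX) => f fe.
  by rewrite /vopp Ye; case: ltngtP (idx_neq f fe).
Qed.
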